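(* Let \(G\) be a connected complex reductive group with a fixed Borel subgroup \(B\), maximal torus \(T\subset B\), positive roots \(R^+\), and \(\varpi=\frac12\sum_{\alpha\in R^+}\alpha\); fix a Weyl-invariant scalar product \(\langle\cdot,\cdot\rangle\) on \(\mathfrak{X}(T)\otimes\mathbb{R}\). Let \(X\) be a projective rank one \(G\)-spherical variety with spherical lattice \(M\), let \(\sigma\) be its spherical root if \(X\) is not horospherical and any generator of \(M\) otherwise, and let \(L\) be an ample line bundle on \(X\) with moment polytope \(\Delta_+=\{\chi+t\sigma\mid t\in[s_-,s_+]\}\), where \(\chi\in\Delta_+\) and \(s_-<s_+\). Let \(R_X^+\) be the set of positive roots not vanishing identically on \(\Delta_+\), and set \[P(t)=\prod_{\alpha\in R_X^+}\frac{\langle\alpha,\chi+t\sigma\rangle}{\langle\alpha,\varpi\rangle},\qquad Q(t)=\Big(\sum_{\alpha\in R_X^+}\frac{\langle\alpha,\varpi\rangle}{\langle\alpha,\chi+t\sigma\rangle}\Big)P(t),\] and let \(a\in\mathbb{R}\) be the number such that \(P(s_-)+P(s_+)-\int_{s_-}^{s_+}2(aP(t)-Q(t))\,dt=0\). If \(P(s_+)=0\) (resp. \(P(s_-)=0\)), then \((aP-Q)(t)<0\) for all \(t\in[s_-,s_+]\) sufficiently close to \(s_+\) (resp. \(s_-\)).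
   Context: The moment polytope \(\Delta_+\) of \(L\) is the closure of the set of all \(\lambda/k\in\mathfrak{X}(T)\otimes\mathbb{R}\), where \(\lambda\) runs over weights of \(B\)-stable lines in \(H^0(X,L^{\otimes k})\), \(k\geq1\); it is a segment in an affine line with direction \(M\otimes\mathbb{R}\), contained in the positive Weyl chamber, so \(P\) and \(Q\) are positive on \(]s_-,s_+[\). For non-horospherical \(X\), the spherical root is the generator of \(M\) evaluating negatively on the (unique one-dimensional) cone of the colored fan of \(X\). *)

From HB Require Import structures.
From mathcomp Require Import all_boot all_order all_algebra.
From mathcomp Require Import all_classical all_reals all_analysis.
Set Implicit Arguments. Unset Strict Implicit. Unset Printing Implicit Defensive.
Import Order.TTheory GRing.Theory Num.Theory.
Local Open Scope ring_scope.

(* X(T) (x) R is modelled as 'rV[R]_n, with a scalar product given by a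
   symmetric positive definite Gram matrix S. *)
Definition ip (R : realType) (n : nat) (S : 'M[R]_n) (u v : 'rV[R]_n) : R :=
  (u *m S *m v^T) 0 0.

Definition is_scalar_product (R : realType) (n : nat) (S : 'M[R]_n) : Prop :=
  S^T = S /\ (forall v : 'rV[R]_n, v != 0 -> 0 < ip S v v).

Definition root_refl (R : realType) (n : nat) (S : 'M[R]_n) (a x : 'rV[R]_n) : 'rV[R]_n :=
  x - ((2 * ip S a x) / ip S a a) *: a.

(* Rs is a (reduced, crystallographic) root system in 'rV_n for the scalar
   product S; S is then automatically invariant under the Weyl group, which
   is generated by the reflections root_refl S a, a in Rs. *)
Definition is_root_system (R : realType) (n : nat) (S : 'M[R]_n)
    (Rs : seq 'rV[R]_n) : Prop :=
  [/\ uniq Rs /\ (0 : 'rV[R]_n) \notin Rs,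
      (forall a, a \in Rs -> - a \in Rs),
      (forall a (c : R), a \in Rs -> c *: a \in Rs -> c = 1 \/ c = -1),
      (forall a b, a \in Rs -> b \in Rs -> root_refl S a b \in Rs) &
      (forall a b, a \in Rs -> b \in Rs -> (2 * ip S a b) / ip S a a \is a Num.int)].

(* Rp is the set of positive roots for some choice of positive system
   (equivalently, of Borel subgroup B containing T). *)
Definition is_positive_system (R : realType) (n : nat) (S : 'M[R]_n)
    (Rs Rp : seq 'rV[R]_n) : Prop :=
  exists v : 'rV[R]_n, (forall a, a \in Rs -> ip S a v != 0) /\
                       Rp = [seq a <- Rs | 0 < ip S a v].

Definition varpi (R : realType) (n : nat) (Rp : seq 'rV[R]_n) : 'rV[R]_n :=
  2^-1 *: \sum_(a <- Rp) a.

Definition seg_pt (R : realType) (n : nat) (chi sigma : 'rV[R]_n) (t : R) : 'rV[R]_n :=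
  chi + t *: sigma.

Definition RX (R : realType) (n : nat) (S : 'M[R]_n) (Rp : seq 'rV[R]_n)
    (chi sigma : 'rV[R]_n) (sm sp : R) : seq 'rV[R]_n :=
  [seq a <- Rp | `[< exists t : R, sm <= t <= sp /\ ip S a (seg_pt chi sigma t) != 0 >] ].

Definition Pdh (R : realType) (n : nat) (S : 'M[R]_n) (Rp : seq 'rV[R]_n)
    (chi sigma : 'rV[R]_n) (sm sp : R) (t : R) : R :=
  \prod_(a <- RX S Rp chi sigma sm sp)
     (ip S a (seg_pt chi sigma t) / ip S a (varpi Rp)).

Definition Qdh (R : realType) (n : nat) (S : 'M[R]_n) (Rp : seq 'rV[R]_n)
    (chi sigma : 'rV[R]_n) (sm sp : R) (t : R) : R :=
  (\sum_(a <- RX S Rp chi sigma sm sp)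
     (ip S a (varpi Rp) / ip S a (seg_pt chi sigma t)))
  * Pdh S Rp chi sigma sm sp t.

From HB Require Import structures.
From mathcomp Require Import all_boot all_order all_algebra.
From mathcomp Require Import all_classical all_reals all_analysis.
From mathcomp Require Import ring lra.
Set Implicit Arguments. Unset Strict Implicit. Unset Printing Implicit Defensive.
Import Order.TTheory GRing.Theory Num.Theory.
Local Open Scope ring_scope.
Local Open Scope classical_set_scope.

(* Write [l_al(t) = <al, chi + t sigma>], an affine function of [t].  Then
   [Q / P = \sum_(al in R_X^+) <al, varpi> / l_al(t)], and [<al, varpi> > 0]
   for every positive root [al] (the reflection [s_al] permutes the positive
   roots it keeps positive, so they contribute nothing to [<al, 2 varpi>],
   while those it makes negative, [al] among them, pair positively with [al]).
   Each [l_al] is nonnegative at both ends of [[s_-, s_+]] and not identically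
   zero, hence positive inside, so [P > 0] there.  If [P] vanishes at an
   endpoint, some [l_al] vanishes there, and its term drives [Q / P] to
   [+oo]; thus [a P - Q = P (a - Q / P) < 0] nearby, whatever [a] is. *)

Section ScalarProduct.
Variables (R : realType) (n : nat) (S : 'M[R]_n).

Lemma ipDl u w v : ip S (u + w) v = ip S u v + ip S w v.
Proof. by rewrite /ip !mulmxDl mxE. Qed.

Lemma ipZl c u v : ip S (c *: u) v = c * ip S u v.
Proof. by rewrite /ip -!scalemxAl mxE. Qed.

Lemma ipNl u v : ip S (- u) v = - ip S u v.
Proof. by rewrite -scaleN1r ipZl mulN1r. Qed.

Lemma ipDr u w v : ip S u (w + v) = ip S u w + ip S u v.
Proof. by rewrite /ip linearD /= mulmxDr mxE. Qed.

Lemma ipZr c u v : ip S u (c *: v) = c * ip S u v.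
Proof. by rewrite /ip linearZ /= -scalemxAr mxE. Qed.

Lemma ipNr u v : ip S u (- v) = - ip S u v.
Proof. by rewrite -scaleN1r ipZr mulN1r. Qed.

Lemma ip_sumr u (s : seq 'rV[R]_n) :
  ip S u (\sum_(b <- s) b) = \sum_(b <- s) ip S u b.
Proof.
elim: s => [|x s IH]; first by rewrite !big_nil /ip linear0 mulmx0 mxE.
by rewrite !big_cons ipDr IH.
Qed.

Lemma ip_seg_pt u chi sigma t :
  ip S u (seg_pt chi sigma t) = ip S u chi + t * ip S u sigma.
Proof. by rewrite /seg_pt ipDr ipZr. Qed.

Lemma ip_root_refll al x v :
  ip S (root_refl S al x) v = ip S x v - (2 * ip S al x / ip S al al) * ip S al v.
Proof. by rewrite /root_refl ipDl ipNl ipZl. Qed.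

Lemma ip_root_reflr al x : ip S al al != 0 ->
  ip S al (root_refl S al x) = - ip S al x.
Proof. by move=> al0; rewrite /root_refl ipDr ipNr ipZr; field. Qed.

Lemma root_reflK al : ip S al al != 0 -> involutive (root_refl S al).
Proof.
move=> al0 x; rewrite {1}/root_refl ip_root_reflr // /root_refl.
by rewrite mulrN mulNr scaleNr opprK subrK.
Qed.

Lemma root_refl_ip_gt0 al y v :
  0 < ip S al al -> 0 < ip S al v -> 0 < ip S y v ->
  ip S (root_refl S al y) v <= 0 -> 0 < ip S al y.
Proof.
move=> alal alv yv; rewrite ip_root_refll => syv.
have : 0 < (2 * ip S al y / ip S al al) * ip S al v by lra.
by rewrite pmulr_lgt0 // -mulrA pmulr_rgt0 // pmulr_lgt0 // invr_gt0.
Qed.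

End ScalarProduct.

Lemma sum_eq0_oppr_involution (R : numDomainType) (T : eqType)
    (s : T -> T) (f : T -> R) (r : seq T) :
  uniq r -> {in r, forall x, s x \in r} -> {in r, involutive s} ->
  {in r, forall x, f (s x) = - f x} -> \sum_(x <- r) f x = 0.
Proof.
move=> r_uniq sr sK fN.
have r_perm : perm_eq r (map s r).
  apply: uniq_perm => //.
    by rewrite map_inj_in_uniq // => x y xr yr /(congr1 s); rewrite !sK.
  move=> y; apply/idP/mapP => [yr | [x xr ->]]; last exact: sr.
  by exists (s y); rewrite ?sr ?sK.
have : \sum_(x <- r) f x = - \sum_(x <- r) f x.
  rewrite {1}(perm_big _ r_perm) big_map -sumrN big_seq_cond [RHS]big_seq_cond.
  by apply: eq_bigr => x /andP[xr _]; rewrite fN.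
by move/eqP; rewrite -addr_eq0 -mulr2n mulrn_eq0 => /eqP.
Qed.

Section PositiveRoots.
Variables (R : realType) (n : nat) (S : 'M[R]_n) (Rs Rp : seq 'rV[R]_n).
Hypotheses (S_pd : is_scalar_product S) (Rs_root : is_root_system S Rs)
  (Rp_pos : is_positive_system S Rs Rp).

Lemma ip_varpi_gt0 al : al \in Rp -> 0 < ip S al (varpi Rp).
Proof.
move=> alRp; have [_ S_pos] := S_pd; have [v [_ Rp_def]] := Rp_pos.
have [[Rs_uniq Rs_0] _ _ Rs_refl _] := Rs_root.
have memRp b : (b \in Rp) = (0 < ip S b v) && (b \in Rs) by rewrite Rp_def mem_filter.
have /andP[alv alRs] : (0 < ip S al v) && (al \in Rs) by rewrite -memRp.
have alal : 0 < ip S al al by apply: S_pos; apply: contraNneq Rs_0 => <-.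
have alK := root_reflK (lt0r_neq0 alal).
rewrite /varpi ipZr ip_sumr pmulr_rgt0; last by rewrite invr_gt0 ltr0n.
pose kept := [seq b <- Rp | 0 < ip S (root_refl S al b) v].
pose flipped := [seq b <- Rp | ~~ (0 < ip S (root_refl S al b) v)].
have -> : \sum_(b <- Rp) ip S al b =
    \sum_(b <- kept) ip S al b + \sum_(b <- flipped) ip S al b.
  by rewrite !big_filter [LHS](bigID (fun b => 0 < ip S (root_refl S al b) v)).
have -> : \sum_(b <- kept) ip S al b = 0.
  apply: (sum_eq0_oppr_involution (s := root_refl S al)).
  - by rewrite !filter_uniq // Rp_def filter_uniq.
  - move=> b; rewrite !mem_filter !memRp alK => /and3P[sbv bv bRs].
    by rewrite sbv bv Rs_refl.
  - by move=> b _; apply: alK.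
  - by move=> b _; rewrite ip_root_reflr ?lt0r_neq0.
have flipped_gt0 b : b \in flipped -> 0 < ip S al b.
  rewrite mem_filter memRp -leNgt => /and3P[sbv bv _].
  exact: root_refl_ip_gt0 sbv.
have al_flipped : al \in flipped.
  by rewrite mem_filter alRp -leNgt ip_root_refll mulfK ?lt0r_neq0 //; lra.
rewrite add0r (big_rem al) // ltr_pwDl ?flipped_gt0 // big_seq.
by apply: sumr_ge0 => b /mem_rem /flipped_gt0 /ltW.
Qed.

End PositiveRoots.

Lemma affine_gt0_interior (R : realFieldType) (A B sm sp t1 t : R) :
  0 <= A + sm * B -> 0 <= A + sp * B -> A + t1 * B != 0 ->
  sm < t < sp -> 0 < A + t * B.
Proof.
move=> sm_ge0 sp_ge0 /eqP t1_neq0 /andP[smt tsp].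
rewrite ltNge; apply/negP => t_le0.
have B_le0 : B <= 0.
  have : (t - sm) * B <= 0 by lra.
  by rewrite pmulr_rle0 // subr_gt0.
have B_ge0 : 0 <= B.
  have : 0 <= (sp - t) * B by lra.
  by rewrite pmulr_rge0 // subr_gt0.
have B0 : B = 0 by apply/eqP; rewrite eq_le B_le0 B_ge0.
by apply: t1_neq0; rewrite B0 in sm_ge0 t_le0 *; lra.
Qed.

Lemma gt_div_near0 (R : realFieldType) (a c : R) : 0 < c ->
  exists2 e, 0 < e & forall x, 0 < x < e -> a < c / x.
Proof.
move=> c_gt0; have a1_gt0 : 0 < `|a| + 1 by rewrite ltr_pwDr.
exists (c / (`|a| + 1)); first by rewrite divr_gt0.
move=> x /andP[x_gt0]; rewrite ltr_pdivlMr // ltr_pdivlMr // => xc.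
have : a * x <= `|a| * x by rewrite ler_pM2r // ler_norm.
nra.
Qed.

Lemma gt_div_affine_near_root (R : realFieldType) (a c A B t0 : R) :
  0 < c -> A + t0 * B = 0 ->
  exists2 e, 0 < e & forall t, `|t - t0| < e -> 0 < A + t * B -> a < c / (A + t * B).
Proof.
move=> c_gt0 t0_root; have [e e_gt0 He] := gt_div_near0 a c_gt0.
have B1_gt0 : 0 < `|B| + 1 by rewrite ltr_pwDr.
exists (e / (`|B| + 1)); first by rewrite divr_gt0.
move=> t; rewrite ltr_pdivlMr // => te lt_gt0; apply: He; rewrite lt_gt0 /=.
have -> : A + t * B = (t - t0) * B by lra.
have : `|t - t0| * `|B| <= `|t - t0| * (`|B| + 1) by rewrite ler_wpM2l ?lerDl.
by rewrite -normrM; move: (ler_norm ((t - t0) * B)); lra.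
Qed.

Section MomentSegment.
Variables (R : realType) (n : nat) (S : 'M[R]_n) (Rs Rp : seq 'rV[R]_n).
Variables (chi sigma : 'rV[R]_n) (sm sp : R).
Hypotheses (S_pd : is_scalar_product S) (Rs_root : is_root_system S Rs)
  (Rp_pos : is_positive_system S Rs Rp) (sm_lt_sp : sm < sp)
  (seg_dominant : forall al t, al \in Rp -> sm <= t <= sp ->
                    0 <= ip S al (seg_pt chi sigma t)).

Local Notation RX := (RX S Rp chi sigma sm sp).
Local Notation P := (Pdh S Rp chi sigma sm sp).
Local Notation Q := (Qdh S Rp chi sigma sm sp).

Lemma RX_ip_varpi_gt0 al : al \in RX -> 0 < ip S al (varpi Rp).
Proof. by rewrite mem_filter => /andP[_]; exact: (ip_varpi_gt0 S_pd Rs_root). Qed.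

Lemma RX_ip_seg_pt_gt0 al t : al \in RX -> sm < t < sp ->
  0 < ip S al (seg_pt chi sigma t).
Proof.
rewrite mem_filter => /andP[/asboolP[t1 [_ t1_neq0]] alRp] smtsp.
have seg_end_ge0 u : u = sm \/ u = sp -> 0 <= ip S al chi + u * ip S al sigma.
  move=> u_end; rewrite -ip_seg_pt seg_dominant //.
  by case: u_end => ->; rewrite lexx (ltW sm_lt_sp).
rewrite ip_seg_pt; rewrite ip_seg_pt in t1_neq0.
by apply: (affine_gt0_interior _ _ t1_neq0 smtsp); apply: seg_end_ge0; [left|right].
Qed.

Lemma Pdh_gt0 t : sm < t < sp -> 0 < P t.
Proof.
move=> smtsp; rewrite /Pdh big_seq; apply: prodr_gt0 => al alRX.
by rewrite divr_gt0 ?RX_ip_varpi_gt0 ?RX_ip_seg_pt_gt0.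
Qed.

Lemma Pdh_eq0 t0 : P t0 = 0 ->
  exists2 al, al \in RX & ip S al (seg_pt chi sigma t0) = 0.
Proof.
move=> /eqP; rewrite /Pdh prodf_seq_eq0 => /hasP[al alRX /=].
rewrite mulf_eq0 invr_eq0 (gt_eqF (RX_ip_varpi_gt0 alRX)) orbF => /eqP.
by exists al.
Qed.

Lemma Pdh_Qdh_lt0 a al t : sm < t < sp -> al \in RX ->
  a < ip S al (varpi Rp) / ip S al (seg_pt chi sigma t) -> a * P t - Q t < 0.
Proof.
move=> smtsp alRX a_lt.
have term_gt0 b : b \in RX -> 0 < ip S b (varpi Rp) / ip S b (seg_pt chi sigma t).
  by move=> bRX; rewrite divr_gt0 ?RX_ip_varpi_gt0 ?RX_ip_seg_pt_gt0.
have term_le_sum : ip S al (varpi Rp) / ip S al (seg_pt chi sigma t) <=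
    \sum_(b <- RX) ip S b (varpi Rp) / ip S b (seg_pt chi sigma t).
  rewrite (big_rem al) //= lerDl big_seq.
  by apply: sumr_ge0 => b /mem_rem /term_gt0 /ltW.
have := Pdh_gt0 smtsp; rewrite /Qdh.
move: term_le_sum; set Pt := P t; set sum := \sum_(_ <- _) _.
nra.
Qed.

Lemma Pdh_Qdh_lt0_near_root a t0 : P t0 = 0 ->
  exists e, [/\ 0 < e, e <= sp - sm &
    forall t, sm < t < sp -> `|t - t0| < e -> a * P t - Q t < 0].
Proof.
move=> /Pdh_eq0[al alRX]; rewrite ip_seg_pt => t0_root.
have [e e_gt0 He] := gt_div_affine_near_root a (RX_ip_varpi_gt0 alRX) t0_root.
exists (Num.min e (sp - sm)); split.
- by rewrite lt_min e_gt0 subr_gt0.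
- by rewrite ge_min lexx orbT.
- move=> t smtsp; rewrite lt_min => /andP[te _].
  apply: (Pdh_Qdh_lt0 smtsp alRX); rewrite ip_seg_pt.
  by apply: He; rewrite // -ip_seg_pt RX_ip_seg_pt_gt0.
Qed.

End MomentSegment.

Theorem lemma3p2 (R : realType) (n : nat) (S : 'M[R]_n)
    (Rs Rp : seq 'rV[R]_n) (chi sigma : 'rV[R]_n) (sm sp a : R) :
  is_scalar_product S ->
  is_root_system S Rs ->
  is_positive_system S Rs Rp ->
  sm < sp ->
  (* chi lies in Delta_+ *)
  sm <= 0 <= sp ->
  (* Delta_+ is contained in the positive Weyl chamber *)
  (forall al t, al \in Rp -> sm <= t <= sp -> 0 <= ip S al (seg_pt chi sigma t)) ->
  (* a is the number defined by the integral equation *)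
  Pdh S Rp chi sigma sm sp sm + Pdh S Rp chi sigma sm sp sp
    - Rintegral lebesgue_measure `[sm, sp]
        (fun t => 2 * (a * Pdh S Rp chi sigma sm sp t - Qdh S Rp chi sigma sm sp t))
    = 0 ->
  (Pdh S Rp chi sigma sm sp sp = 0 ->
     exists2 e : R, 0 < e & forall t, sp - e < t < sp ->
       a * Pdh S Rp chi sigma sm sp t - Qdh S Rp chi sigma sm sp t < 0) /\
  (Pdh S Rp chi sigma sm sp sm = 0 ->
     exists2 e : R, 0 < e & forall t, sm < t < sm + e ->
       a * Pdh S Rp chi sigma sm sp t - Qdh S Rp chi sigma sm sp t < 0).
Proof.
move=> S_pd Rs_root Rp_pos sm_lt_sp _ seg_dominant _.
have near_root := Pdh_Qdh_lt0_near_root S_pd Rs_root Rp_pos sm_lt_sp seg_dominant a.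
split=> /near_root[e [e_gt0 e_le He]]; exists e => // t /andP[t_gt t_lt];
  by apply: He; rewrite ?ltr_norml; apply/andP; split; lra.
Qed.
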